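(* Let $e_0,\dots,e_{14}$ be the coefficients of the numerator $\mathbf{E}_4(X)$ of the generating series $\sum_{\delta\ge0}\mathbf{T}(p^\delta)X^\delta$ for $\mathrm{Sp}_4$, given explicitly as polynomials in $p$, $T=\mathbf{T}(p)$, $T_1,T_2,T_3$, $\Delta=[\mathbf{p}]$ by: $e_0=1$, $e_1=0$, $e_2=-p^2\big((p^8+p^6+2p^4+2p^2+1)\Delta+(p^2+p+1)(p^2-p+1)T_3+T_2\big)$, $e_3=p^4(p+1)\big((p^2+1)(p^3-p^2+1)\Delta+T_3\big)T$, $e_4=p^7\big((p^2+p+1)(p^2-p+1)(p^8+3p^7+p^5+2p^3+p-1)\Delta^2+(p^2+p+1)(p^2-p+1)(2p^3+p-2)T_3\Delta-(p^2+p+1)(p^2-p+1)T_3^2+(2p^5+2p^3+p^2+p-1)T_2\Delta-T_2T_3+p(p^2+p+1)T_1\Delta-(p^2+p+1)T^2\Delta\big)$, $e_5=-p^{10}(p+1)\big((p^2+1)(p^7-p^6-p^2-1)\Delta-(p^2+1)T_3-T_2\big)T\Delta$, $e_6=p^{14}\big((p^{16}-p^{15}-2p^{14}-3p^{12}-5p^{10}-8p^8+p^7-8p^6-5p^4-4p^2-1)\Delta^3+(p^{12}-p^{10}-p^9-5p^8+2p^7-7p^6-6p^4-8p^2+p-2)T_3\Delta^2+(p^7-p^4-4p^2+2p-1)T_3^2\Delta+pT_3^3-(2p^8+3p^6+p^4-p^3+3p^2+p+1)T_2\Delta^2-(3p^2+p+1)T_2T_3\Delta-(p^6-p^3+1)T_1\Delta^2-T_1T_3\Delta+p^2(p^3+p-1)T^2\Delta^2\big)$,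 $e_7=-p^{19}(p-1)(p+1)\big((p^2+p+1)(p^2-p+1)(p^2+1)\Delta+(p^2+p+1)(p^2-p+1)T_3+T_2\big)T\Delta^2$, $e_8=-p^{24}\big((p^{16}-3p^{12}-3p^{10}-p^9-9p^8-8p^6-7p^4-5p^2+p-1)\Delta^3+(p^{10}-p^9-4p^8-6p^6-8p^4-9p^2+3p-2)T_3\Delta^2-(p^4+4p^2-3p+1)T_3^2\Delta+pT_3^3-(p^8+2p^6-p^5+2p^4+p^3+4p^2+1)T_2\Delta^2-(p^3+3p^2+1)T_2T_3\Delta+(p^5-p^2-1)T_1\Delta^2-T_1T_3\Delta-p(p^3-p^2-1)T^2\Delta^2\big)\Delta$, $e_9=p^{29}(p+1)\big((p^2+1)(p^5-2p^4-1)\Delta-(p^4+1)T_3-T_2\big)T\Delta^3$, $e_{10}=-p^{35}\big((p^2-p+1)(p^2+p+1)(p^8+2p^7+p^5+3p^3+p-1)\Delta^2-(p^2-p+1)(p^2+p+1)(p^5-3p^3-p+2)T_3\Delta-(p^2-p+1)(p^2+p+1)T_3^2+(p^5+3p^3+p^2+p-1)T_2\Delta-T_2T_3+p(p^2+p+1)T_1\Delta-(p^2+p+1)T^2\Delta\big)\Delta^3$, $e_{11}=-p^{41}(p+1)\big((p^2+1)(p^3-p^2+1)\Delta+T_3\big)T\Delta^4$, $e_{12}=p^{48}\big((2p^6+2p^4+2p^2+1)\Delta+(p^2-p+1)(p^2+p+1)T_3+T_2\big)\Delta^5$, $e_{13}=0$, $e_{14}=-p^{64}\Delta^7$. Let $\Omega(e_k)\in\mathbb{Q}(p)[x_0^{\pm1},x_1^{\pm1},\dots,x_4^{\pm1}]$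 be obtained by substituting into $e_k$ the images $\Omega(T),\Omega(T_1),\Omega(T_2),\Omega(T_3),\Omega(\Delta)$ listed in the context, regarding $p$ as an indeterminate. Then for every $k=0,\dots,14$: $$\Omega(e_{14-k})(p,x_0,x_1,x_2,x_3,x_4)=-p^{-6}\,(x_0^2x_1x_2x_3x_4)^{7-k}\;\Omega(e_k)\Big(\tfrac1p,\;x_0x_1x_2x_3x_4,\;\tfrac1{x_1},\tfrac1{x_2},\tfrac1{x_3},\tfrac1{x_4}\Big).$$
   Context: Here $\mathbf{T}(p)$, $T_i=\mathbf{T}_i(p^2)$ and $\Delta=[\mathbf{p}]$ are the standard generators of the Hecke ring of $\mathrm{Sp}_4(\mathbb{Z})$ inside the group of positive symplectic similitudes of genus 4, and $\mathbf{E}_4(X)=\sum e_kX^k$ is the numerator in $\sum_{\delta\ge0}\mathbf{T}(p^\delta)X^\delta=\mathbf{E}_4(X)/\mathbf{F}_4(X)$. The spherical (Satake) map $\Omega$ is the ring homomorphism into Laurent polynomials in $x_0,\dots,x_4$ whose values on generators are as follows. For integers $i_1\ge i_2\ge i_3\ge i_4\ge0$ let $\mathrm{sym}_{i_1i_2i_3i_4}$ denote the sum of the distinct monomials obtained from $x_1^{i_1}x_2^{i_2}x_3^{i_3}x_4^{i_4}$ by permuting $x_1,\dots,x_4$ (each with coefficient 1). Then $\Omega(\mathbf{T}(p))=x_0(\mathrm{sym}_{1111}+\mathrm{sym}_{1110}+\mathrm{sym}_{1100}+\mathrm{sym}_{1000}+1)$; $\Omega(T_1)=x_0^2p^{-8}\big((p-1)^2(p+1)(4p^4+3p^3+3p^2+p+1)\mathrm{sym}_{1111}+p^4(p-1)(3p^2+2p+1)(\mathrm{sym}_{2111}+\mathrm{sym}_{1110})+p^5(p-1)(p+1)(\mathrm{sym}_{2211}+\mathrm{sym}_{2110}+\mathrm{sym}_{1100})+p^7(\mathrm{sym}_{2221}+\mathrm{sym}_{2210}+\mathrm{sym}_{2100}+\mathrm{sym}_{1000})\big)$;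 $\Omega(T_2)=x_0^2p^{-8}\big((p-1)(4p^4+3p^3+3p^2+p+1)\mathrm{sym}_{1111}+p^2(p-1)(p^2+p+1)(\mathrm{sym}_{2111}+\mathrm{sym}_{1110})+p^5(\mathrm{sym}_{2211}+\mathrm{sym}_{2110}+\mathrm{sym}_{1100})\big)$; $\Omega(T_3)=x_0^2p^{-10}\big((p-1)(p+1)(p^2+1)\mathrm{sym}_{1111}+p^4(\mathrm{sym}_{2111}+\mathrm{sym}_{1110})\big)$; $\Omega(\Delta)=x_0^2p^{-10}\mathrm{sym}_{1111}=x_0^2p^{-10}x_1x_2x_3x_4$. *)

From HB Require Import structures.
From mathcomp Require Import all_boot all_order all_algebra.
Set Implicit Arguments. Unset Strict Implicit. Unset Printing Implicit Defensive.
Import Order.TTheory GRing.Theory Num.Theory.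
Local Open Scope ring_scope.

Definition perms4 (a b c d : nat) : seq (nat * nat * nat * nat) :=
  [:: (a,b,c,d); (a,b,d,c); (a,c,b,d); (a,c,d,b); (a,d,b,c); (a,d,c,b);
      (b,a,c,d); (b,a,d,c); (b,c,a,d); (b,c,d,a); (b,d,a,c); (b,d,c,a);
      (c,a,b,d); (c,a,d,b); (c,b,a,d); (c,b,d,a); (c,d,a,b); (c,d,b,a);
      (d,a,b,c); (d,a,c,b); (d,b,a,c); (d,b,c,a); (d,c,a,b); (d,c,b,a)]%N.

(* sym_{abcd}: sum of the distinct monomials obtained from x1^a x2^b x3^c x4^d
   by permuting x1..x4, each with coefficient 1. *)
Definition sym (F : comRingType) (x1 x2 x3 x4 : F) (a b c d : nat) : F :=
  \sum_(e <- undup (perms4 a b c d))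
     x1 ^+ e.1.1.1 * x2 ^+ e.1.1.2 * x3 ^+ e.1.2 * x4 ^+ e.2.

Section Omega.
Variable F : fieldType.
Variables p x0 x1 x2 x3 x4 : F.
Local Notation s := (sym x1 x2 x3 x4).

Definition OmT : F := x0 * (s 1 1 1 1 + s 1 1 1 0 + s 1 1 0 0 + s 1 0 0 0 + 1).

Definition OmT1 : F := x0 ^+ 2 * p ^- 8 *
  ((p - 1) ^+ 2 * (p + 1) * (4 * p ^+ 4 + 3 * p ^+ 3 + 3 * p ^+ 2 + p + 1) * s 1 1 1 1
   + p ^+ 4 * (p - 1) * (3 * p ^+ 2 + 2 * p + 1) * (s 2 1 1 1 + s 1 1 1 0)
   + p ^+ 5 * (p - 1) * (p + 1) * (s 2 2 1 1 + s 2 1 1 0 + s 1 1 0 0)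
   + p ^+ 7 * (s 2 2 2 1 + s 2 2 1 0 + s 2 1 0 0 + s 1 0 0 0)).

Definition OmT2 : F := x0 ^+ 2 * p ^- 8 *
  ((p - 1) * (4 * p ^+ 4 + 3 * p ^+ 3 + 3 * p ^+ 2 + p + 1) * s 1 1 1 1
   + p ^+ 2 * (p - 1) * (p ^+ 2 + p + 1) * (s 2 1 1 1 + s 1 1 1 0)
   + p ^+ 5 * (s 2 2 1 1 + s 2 1 1 0 + s 1 1 0 0)).

Definition OmT3 : F := x0 ^+ 2 * p ^- 10 *
  ((p - 1) * (p + 1) * (p ^+ 2 + 1) * s 1 1 1 1
   + p ^+ 4 * (s 2 1 1 1 + s 1 1 1 0)).

Definition OmD : F := x0 ^+ 2 * p ^- 10 * s 1 1 1 1.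
End Omega.

Definition ecoef (F : fieldType) (k : nat) (p T T1 T2 T3 D : F) : F :=
  let q := (p ^+ 2 + p + 1) * (p ^+ 2 - p + 1) in
  match k with
  | 0 => 1
  | 1 => 0
  | 2 => - p ^+ 2 * ((p ^+ 8 + p ^+ 6 + 2 * p ^+ 4 + 2 * p ^+ 2 + 1) * D + q * T3 + T2)
  | 3 => p ^+ 4 * (p + 1) * ((p ^+ 2 + 1) * (p ^+ 3 - p ^+ 2 + 1) * D + T3) * T
  | 4 => p ^+ 7 * (q * (p ^+ 8 + 3 * p ^+ 7 + p ^+ 5 + 2 * p ^+ 3 + p - 1) * D ^+ 2
          + q * (2 * p ^+ 3 + p - 2) * T3 * D - q * T3 ^+ 2
          + (2 * p ^+ 5 + 2 * p ^+ 3 + p ^+ 2 + p - 1) * T2 * D - T2 * T3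
          + p * (p ^+ 2 + p + 1) * T1 * D - (p ^+ 2 + p + 1) * T ^+ 2 * D)
  | 5 => - p ^+ 10 * (p + 1) * ((p ^+ 2 + 1) * (p ^+ 7 - p ^+ 6 - p ^+ 2 - 1) * D
          - (p ^+ 2 + 1) * T3 - T2) * T * D
  | 6 => p ^+ 14 * ((p ^+ 16 - p ^+ 15 - 2 * p ^+ 14 - 3 * p ^+ 12 - 5 * p ^+ 10
            - 8 * p ^+ 8 + p ^+ 7 - 8 * p ^+ 6 - 5 * p ^+ 4 - 4 * p ^+ 2 - 1) * D ^+ 3
          + (p ^+ 12 - p ^+ 10 - p ^+ 9 - 5 * p ^+ 8 + 2 * p ^+ 7 - 7 * p ^+ 6
            - 6 * p ^+ 4 - 8 * p ^+ 2 + p - 2) * T3 * D ^+ 2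
          + (p ^+ 7 - p ^+ 4 - 4 * p ^+ 2 + 2 * p - 1) * T3 ^+ 2 * D
          + p * T3 ^+ 3
          - (2 * p ^+ 8 + 3 * p ^+ 6 + p ^+ 4 - p ^+ 3 + 3 * p ^+ 2 + p + 1) * T2 * D ^+ 2
          - (3 * p ^+ 2 + p + 1) * T2 * T3 * D
          - (p ^+ 6 - p ^+ 3 + 1) * T1 * D ^+ 2
          - T1 * T3 * D
          + p ^+ 2 * (p ^+ 3 + p - 1) * T ^+ 2 * D ^+ 2)
  | 7 => - p ^+ 19 * (p - 1) * (p + 1) * (q * (p ^+ 2 + 1) * D + q * T3 + T2) * T * D ^+ 2
  | 8 => - p ^+ 24 * ((p ^+ 16 - 3 * p ^+ 12 - 3 * p ^+ 10 - p ^+ 9 - 9 * p ^+ 8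
            - 8 * p ^+ 6 - 7 * p ^+ 4 - 5 * p ^+ 2 + p - 1) * D ^+ 3
          + (p ^+ 10 - p ^+ 9 - 4 * p ^+ 8 - 6 * p ^+ 6 - 8 * p ^+ 4 - 9 * p ^+ 2
            + 3 * p - 2) * T3 * D ^+ 2
          - (p ^+ 4 + 4 * p ^+ 2 - 3 * p + 1) * T3 ^+ 2 * D
          + p * T3 ^+ 3
          - (p ^+ 8 + 2 * p ^+ 6 - p ^+ 5 + 2 * p ^+ 4 + p ^+ 3 + 4 * p ^+ 2 + 1) * T2 * D ^+ 2
          - (p ^+ 3 + 3 * p ^+ 2 + 1) * T2 * T3 * D
          + (p ^+ 5 - p ^+ 2 - 1) * T1 * D ^+ 2
          - T1 * T3 * D
          - p * (p ^+ 3 - p ^+ 2 - 1) * T ^+ 2 * D ^+ 2) * D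
  | 9 => p ^+ 29 * (p + 1) * ((p ^+ 2 + 1) * (p ^+ 5 - 2 * p ^+ 4 - 1) * D
          - (p ^+ 4 + 1) * T3 - T2) * T * D ^+ 3
  | 10 => - p ^+ 35 * (q * (p ^+ 8 + 2 * p ^+ 7 + p ^+ 5 + 3 * p ^+ 3 + p - 1) * D ^+ 2
          - q * (p ^+ 5 - 3 * p ^+ 3 - p + 2) * T3 * D - q * T3 ^+ 2
          + (p ^+ 5 + 3 * p ^+ 3 + p ^+ 2 + p - 1) * T2 * D - T2 * T3
          + p * (p ^+ 2 + p + 1) * T1 * D - (p ^+ 2 + p + 1) * T ^+ 2 * D) * D ^+ 3
  | 11 => - p ^+ 41 * (p + 1) * ((p ^+ 2 + 1) * (p ^+ 3 - p ^+ 2 + 1) * D + T3) * T * D ^+ 4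
  | 12 => p ^+ 48 * ((2 * p ^+ 6 + 2 * p ^+ 4 + 2 * p ^+ 2 + 1) * D + q * T3 + T2) * D ^+ 5
  | 13 => 0
  | 14 => - p ^+ 64 * D ^+ 7
  | _ => 0
  end.

Definition Om_e (F : fieldType) (k : nat) (p x0 x1 x2 x3 x4 : F) : F :=
  ecoef k p (OmT x0 x1 x2 x3 x4) (OmT1 p x0 x1 x2 x3 x4) (OmT2 p x0 x1 x2 x3 x4)
    (OmT3 p x0 x1 x2 x3 x4) (OmD p x0 x1 x2 x3 x4).

From mathcomp Require Import all_boot all_algebra ring.
Set Implicit Arguments. Unset Strict Implicit.
Import GRing.Theory.
Local Open Scope ring_scope.

(* The substitution p -> 1/p, x0 -> x0 x1 x2 x3 x4, xi -> 1/xi fixes Omega(T)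
   and maps Omega(Delta), Omega(T3), Omega(T2), Omega(T1) to triangular
   Z[p]-linear combinations of the same generators.  The functional equation
   therefore reduces to fifteen identities between the abstract coefficients
   e_k in independent variables T, T1, T2, T3, Delta, once x0^2 x1 x2 x3 x4 is
   recognised as p^10 Omega(Delta). *)

Section DualGenerators.
Variables (F : fieldType) (p T1 T2 T3 D : F).

Definition dualD : F := p ^+ 20 * D.

Definition dualT3 : F := p ^+ 12 * T3 + (p ^+ 12 - p ^+ 20) * D.

Definition dualT2 : F :=
  p ^+ 6 * T2 + (p ^+ 6 - p ^+ 12) * T3
  + (p ^+ 6 + p ^+ 8 + p ^+ 10 - p ^+ 14 - p ^+ 16 - p ^+ 18) * D.

Definition dualT1 : F :=
  p ^+ 2 * T1 + (p ^+ 2 - p ^+ 6) * T2 + (p ^+ 2 + p ^+ 4 - p ^+ 8 - p ^+ 10) * T3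
  + (p ^+ 2 + p ^+ 4 - p ^+ 8 - 2 * p ^+ 10 - p ^+ 12 + p ^+ 16 + p ^+ 18) * D.

End DualGenerators.

Lemma ecoef_dual (F : fieldType) (p T T1 T2 T3 D : F)
    (hp : p != 0) (hD : D != 0) (k : 'I_15) :
  ecoef (14 - k) p T T1 T2 T3 D =
  - p ^- 6 * (p ^+ 10 * D) ^+ 7 / (p ^+ 10 * D) ^+ k
    * ecoef k p^-1 T (dualT1 p T1 T2 T3 D) (dualT2 p T2 T3 D)
        (dualT3 p T3 D) (dualD p D).
Proof.
rewrite /dualT1 /dualT2 /dualT3 /dualD.
case: k => [[|[|[|[|[|[|[|[|[|[|[|[|[|[|[|k]]]]]]]]]]]]]]] hk] //=.
all: by field; rewrite ?oner_neq0 ?hp ?hD.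
Qed.

Ltac expand_sym := rewrite /sym /perms4 /= !big_cons !big_nil /=.

Section OmegaDual.
Variables (F : fieldType) (p x0 x1 x2 x3 x4 : F).
Hypotheses (hp : p != 0) (h1 : x1 != 0) (h2 : x2 != 0) (h3 : x3 != 0)
  (h4 : x4 != 0).
Let y0 := x0 * x1 * x2 * x3 * x4.

Lemma OmT_dual : OmT y0 x1^-1 x2^-1 x3^-1 x4^-1 = OmT x0 x1 x2 x3 x4.
Proof. by rewrite /OmT /y0; expand_sym; field; rewrite ?oner_neq0 ?h1 ?h2 ?h3 ?h4. Qed.

Lemma OmD_dual :
  OmD p^-1 y0 x1^-1 x2^-1 x3^-1 x4^-1 = dualD p (OmD p x0 x1 x2 x3 x4).
Proof.
by rewrite /OmD /dualD /y0; expand_sym; field; rewrite ?oner_neq0 ?hp ?h1 ?h2 ?h3 ?h4.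
Qed.

Lemma OmT3_dual :
  OmT3 p^-1 y0 x1^-1 x2^-1 x3^-1 x4^-1 =
  dualT3 p (OmT3 p x0 x1 x2 x3 x4) (OmD p x0 x1 x2 x3 x4).
Proof.
rewrite /OmT3 /OmD /dualT3 /y0; expand_sym.
by field; rewrite ?oner_neq0 ?hp ?h1 ?h2 ?h3 ?h4.
Qed.

Lemma OmT2_dual :
  OmT2 p^-1 y0 x1^-1 x2^-1 x3^-1 x4^-1 =
  dualT2 p (OmT2 p x0 x1 x2 x3 x4) (OmT3 p x0 x1 x2 x3 x4) (OmD p x0 x1 x2 x3 x4).
Proof.
rewrite /OmT2 /OmT3 /OmD /dualT2 /y0; expand_sym.
by field; rewrite ?oner_neq0 ?hp ?h1 ?h2 ?h3 ?h4.
Qed.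

Lemma OmT1_dual :
  OmT1 p^-1 y0 x1^-1 x2^-1 x3^-1 x4^-1 =
  dualT1 p (OmT1 p x0 x1 x2 x3 x4) (OmT2 p x0 x1 x2 x3 x4)
    (OmT3 p x0 x1 x2 x3 x4) (OmD p x0 x1 x2 x3 x4).
Proof.
rewrite /OmT1 /OmT2 /OmT3 /OmD /dualT1 /y0; expand_sym.
by field; rewrite ?oner_neq0 ?hp ?h1 ?h2 ?h3 ?h4.
Qed.

Lemma OmD_eq : x0 ^+ 2 * x1 * x2 * x3 * x4 = p ^+ 10 * OmD p x0 x1 x2 x3 x4.
Proof. by rewrite /OmD; expand_sym; field; rewrite ?oner_neq0 ?hp. Qed.

Lemma OmD_neq0 : x0 != 0 -> OmD p x0 x1 x2 x3 x4 != 0.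
Proof.
by move=> h0; rewrite /OmD; expand_sym; rewrite addr0 !mulf_neq0 ?invr_neq0 ?expf_neq0.
Qed.

End OmegaDual.

Theorem proposition6p1 (F : fieldType) (p x0 x1 x2 x3 x4 : F)
  (hp : p != 0) (h0 : x0 != 0) (h1 : x1 != 0) (h2 : x2 != 0)
  (h3 : x3 != 0) (h4 : x4 != 0) (k : 'I_15) :
  Om_e (14 - k)%N p x0 x1 x2 x3 x4 =
  - p ^- 6 * (x0 ^+ 2 * x1 * x2 * x3 * x4) ^ (7%:Z - (k : nat)%:Z)
    * Om_e k p^-1 (x0 * x1 * x2 * x3 * x4) x1^-1 x2^-1 x3^-1 x4^-1.
Proof.
have hD := OmD_neq0 hp h1 h2 h3 h4 h0.
have hs : p ^+ 10 * OmD p x0 x1 x2 x3 x4 != 0 by rewrite mulf_neq0 ?expf_neq0.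
rewrite /Om_e OmT_dual // OmD_dual // OmT3_dual // OmT2_dual // OmT1_dual //.
rewrite (OmD_eq x0 x1 x2 x3 x4 hp) (expfzDr _ _ hs) -exprnN mulrA.
exact: ecoef_dual.
Qed.
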